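(* Let $\mathbb V$ be a $k$-module over a linear space $\mathbb W$ admitting a $\mu$-multiplicative basis $\mathfrak B=\{v_i\}_{i\in I}$ with respect to the basis $\mathfrak B'=\{w_j\}_{j\in J}$ of $\mathbb W$. Then $\mathbb V$ is minimal if and only if all elements of $I$ are connected to each other (i.e. $I/\sim$ consists of a single class).
   Context: Fix integers $n\ge 2$ and $1\le k\le n$ and an arbitrary field $\mathbb F$; $S_n$ denotes the symmetric group on $n$ letters. A $k$-module over a linear space $\mathbb W$ is an $\mathbb F$-vector space $\mathbb V$ (the dimensions of $\mathbb V$ and $\mathbb W$ are arbitrary, possibly infinite) together with, for every $\sigma\in S_n$, an $n$-linear map $\mathbb V^k\times\mathbb W^{n-k}\to\mathbb V$, $(x_1,\dots,x_k,y_{k+1},\dots,y_n)\mapsto[x_1,\dots,x_k,y_{k+1},\dots,y_n]_\sigma$ (interpreted as an $n$-ary bracket in which the $l$-th argument is placed in position $\sigma(l)$). A $k$-submodule of $\mathbb V$ is a linear subspace $U$ such that $[u,x_2,\dots,x_k,y_{k+1},\dots,y_n]_\sigma\in U$ for all $\sigma\in S_n$, $u\in U$, $x_l\in\mathbb V$, $y_l\in\mathbb W$. A basis $\mathfrak B=\{v_i\}_{i\in I}$ of $\mathbb V$ is multiplicative (with respect to a basis $\mathfrak B'=\{w_j\}_{j\in J}$ of $\mathbb W$) if for all $\sigma\in S_n$, $i_1,\dots,i_k\in I$, $j_{k+1},\dots,j_n\in J$, the element $[v_{i_1},\dots,v_{i_k},w_{j_{k+1}},\dots,w_{j_n}]_\sigma$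 lies in $\mathbb F v_r$ for some $r\in I$. A $k$-submodule $U$ admits a multiplicative basis inherited from $\mathfrak B$ if some subset of $\mathfrak B$ is a basis of $U$. $\mathbb V$ (with multiplicative basis $\mathfrak B$) is minimal if the only nonzero $k$-submodule of $\mathbb V$ admitting a multiplicative basis inherited from $\mathfrak B$ is $\mathbb V$ itself. Index machinery: let $\overline I=\{\overline i:i\in I\}$ and $\overline J=\{\overline j:j\in J\}$ be sets of new symbols disjoint from $I$ and $J$, with the convention $\overline{\overline x}=x$. For $\sigma\in S_n$, $i_1,\dots,i_k\in I$, $j_{k+1},\dots,j_n\in J$, let $a_\sigma(i_1,\dots,i_k,j_{k+1},\dots,j_n)=\emptyset$ if $[v_{i_1},\dots,v_{i_k},w_{j_{k+1}},\dots,w_{j_n}]_\sigma=0$ and $=\{r\}$ if this bracket is a nonzero element of $\mathbb F v_r$. For $i,i_2,\dots,i_k\in I$, $j_{k+1},\dots,j_n\in J$ let $b_\sigma(i,\overline i_2,\dots,\overline i_k,\overline j_{k+1},\dots,\overline j_n)=\{i'\in I: a_\sigma(i',i_2,\dots,i_k,j_{k+1},\dots,j_n)=\{i\}\}$. For $i\in I$, $X=(x_2,\dots,x_k)\in(I\,\dot\cup\,\overline I)^{k-1}$, $Y=(y_{k+1},\dots,y_n)\in(J\,\dot\cup\,\overline J)^{n-k}$ define $\mu(i,X,Y)\subseteq I$ by: $\mu(i,X,Y)=\bigcup_{\sigma\in S_n}a_\sigma(i,X,Y)$ if all $x_l\in I$ and all $y_l\in J$; $\mu(i,X,Y)=\bigcup_{\sigma\in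 S_n}b_\sigma(i,X,Y)$ if all $x_l\in\overline I$ and all $y_l\in\overline J$; and $\mu(i,X,Y)=\emptyset$ otherwise. For $\mathfrak A\subseteq I$ set $\phi(\mathfrak A,X,Y)=\bigcup_{i\in\mathfrak A}\mu(i,X,Y)$. $\mu$-multiplicativity: a multiplicative basis $\mathfrak B$ is $\mu$-multiplicative if whenever $i,i'\in I$ satisfy $i'\in\mu(i,X,Y)$ for some $X\in(I\,\dot\cup\,\overline I)^{k-1}$, $Y\in(J\,\dot\cup\,\overline J)^{n-k}$, then $v_{i'}$ belongs to the linear span of $\{[v_i,x_2,\dots,x_k,y_{k+1},\dots,y_n]_\sigma:\sigma\in S_n,\ x_l\in\mathbb V,\ y_l\in\mathbb W\}$. Connections: for distinct $i,i'\in I$, a connection from $i$ to $i'$ is a finite sequence $(X_1,Y_1,\dots,X_t,Y_t)$, $t\ge1$, with $X_m\in(I\,\dot\cup\,\overline I)^{k-1}$ and $Y_m\in(J\,\dot\cup\,\overline J)^{n-k}$, such that, setting $\mathfrak A_0=\{i\}$ and $\mathfrak A_m=\phi(\mathfrak A_{m-1},X_m,Y_m)$, one has $\mathfrak A_m\neq\emptyset$ for $1\le m\le t-1$ and $i'\in\mathfrak A_t$. We say $i$ is connected to $i'$ if such a connection exists; by convention every $i\in I$ is connected to itself. This relation, written $i\sim i'$, is an equivalence relation on $I$. *)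

From HB Require Import structures.
From mathcomp Require Import all_boot all_order all_algebra all_fingroup.
Set Implicit Arguments. Unset Strict Implicit. Unset Printing Implicit Defensive.
Import GRing.Theory.
Local Open Scope ring_scope.

Inductive span (F : fieldType) (V : lmodType F) (A : V -> Prop) : V -> Prop :=
  | span_zero : span A 0
  | span_in : forall x, A x -> span A x
  | span_add : forall x y, span A x -> span A y -> span A (x + y)
  | span_scale : forall (c : F) x, span A x -> span A (c *: x).

Definition is_basis_on (F : fieldType) (V : lmodType F) (I : eqType)
    (S : I -> Prop) (v : I -> V) (U : V -> Prop) : Prop :=
  (forall (s : seq I) (c : I -> F), uniq s -> (forall i, i \in s -> S i) ->
      \sum_(i <- s) c i *: v i = 0 -> forall i, i \in s -> c i = 0)
  /\ (forall x, U x <-> span (fun y => exists2 i, S i & y = v i) x).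

Definition is_basis (F : fieldType) (V : lmodType F) (I : eqType) (v : I -> V) :=
  is_basis_on (fun _ => True) v (fun _ => True).

Definition upd (T : Type) (m : nat) (f : 'I_m -> T) (l : 'I_m) (z : T) : 'I_m -> T :=
  fun j => if j == l then z else f j.

Section KModule.
Variables (F : fieldType) (V W : lmodType F) (n k : nat).
(* The bracket [x_1, x_2..x_k, y_{k+1}..y_n]_sigma : first V-argument x_1,
   remaining V-arguments indexed by 'I_(k-1), W-arguments by 'I_(n-k). *)
Variable br : 'S_n -> V -> ('I_(k.-1) -> V) -> ('I_(n - k) -> W) -> V.

Definition multilinear : Prop :=
  (forall s (a : F) x x' X Y, br s (a *: x + x') X Y = a *: br s x X Y + br s x' X Y)
  /\ (forall s x X Y l (a : F) z z',
        br s x (upd X l (a *: z + z')) Y = a *: br s x (upd X l z) Y + br s x (upd X l z') Y)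
  /\ (forall s x X Y l (a : F) z z',
        br s x X (upd Y l (a *: z + z')) = a *: br s x X (upd Y l z) + br s x X (upd Y l z')).

Definition is_subspace (U : V -> Prop) : Prop :=
  U 0 /\ (forall x y, U x -> U y -> U (x + y)) /\ (forall (c : F) x, U x -> U (c *: x)).

Definition k_submodule (U : V -> Prop) : Prop :=
  is_subspace U /\ (forall s u X Y, U u -> U (br s u X Y)).

Variables (I J : eqType) (v : I -> V) (w : J -> W).

Definition multiplicative : Prop :=
  forall s (i : I) (Xs : 'I_(k.-1) -> I) (Ys : 'I_(n - k) -> J),
    exists (r : I) (c : F), br s (v i) (v \o Xs) (w \o Ys) = c *: v r.

Definition admits_inherited_basis (U : V -> Prop) : Prop :=
  exists S : I -> Prop, is_basis_on S v U.

Definition minimal : Prop :=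
  forall U, k_submodule U -> (exists2 x, U x & x <> 0) -> admits_inherited_basis U ->
    forall x, U x.

Definition a_set s (i : I) (Xs : 'I_(k.-1) -> I) (Ys : 'I_(n - k) -> J) (r : I) : Prop :=
  br s (v i) (v \o Xs) (w \o Ys) <> 0 /\
  exists c : F, br s (v i) (v \o Xs) (w \o Ys) = c *: v r.

Definition b_set s (i : I) (Xs : 'I_(k.-1) -> I) (Ys : 'I_(n - k) -> J) (i' : I) : Prop :=
  forall r, a_set s i' Xs Ys r <-> r = i.

(* Symbols: inl x = x in I (resp. J), inr x = bar x in bar I (resp. bar J). *)
Definition mu (i : I) (X : 'I_(k.-1) -> I + I) (Y : 'I_(n - k) -> J + J) (r : I) : Prop :=
  (exists (Xs : 'I_(k.-1) -> I) (Ys : 'I_(n - k) -> J),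
     (forall l, X l = inl (Xs l)) /\ (forall l, Y l = inl (Ys l)) /\
     exists s, a_set s i Xs Ys r)
  \/
  (exists (Xs : 'I_(k.-1) -> I) (Ys : 'I_(n - k) -> J),
     (forall l, X l = inr (Xs l)) /\ (forall l, Y l = inr (Ys l)) /\
     exists s, b_set s i Xs Ys r).

Definition phi (A : I -> Prop) X Y (r : I) : Prop := exists2 i, A i & mu i X Y r.

Definition mu_multiplicative : Prop :=
  forall (i i' : I) X Y, mu i X Y i' ->
    span (fun y => exists s (Xv : 'I_(k.-1) -> V) (Yw : 'I_(n - k) -> W),
                      y = br s (v i) Xv Yw) (v i').

(* conn_path A [:: (X_1,Y_1); ...; (X_t,Y_t)] i' : starting from A_0 = A,
   A_m nonempty for 1 <= m <= t-1 and i' in A_t. *)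
Fixpoint conn_path (A : I -> Prop)
    (p : seq (('I_(k.-1) -> I + I) * ('I_(n - k) -> J + J))) (i' : I) : Prop :=
  match p with
  | [::] => False
  | [:: XY] => phi A XY.1 XY.2 i'
  | XY :: p' => (exists r, phi A XY.1 XY.2 r) /\ conn_path (phi A XY.1 XY.2) p' i'
  end.

Definition connected (i i' : I) : Prop :=
  i = i' \/ exists p, conn_path (fun r => r = i) p i'.

End KModule.

From Pilot Require Import Defs.
From HB Require Import structures.
From mathcomp Require Import all_boot all_order all_algebra all_fingroup.
From Stdlib Require Import Classical ClassicalEpsilon FunctionalExtensionality.
Set Implicit Arguments. Unset Strict Implicit. Unset Printing Implicit Defensive.
Import GRing.Theory.
Import Pilot.Defs.
Local Open Scope ring_scope.

(* A k-submodule with a basis inherited from B is the span of {v_i | i in S},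
   and mu-multiplicativity makes S closed under every mu(-, X, Y); a nonempty
   such S contains the connectedness class of each of its elements, hence is
   all of I when I is a single class.  Conversely, the span of the class of i
   is a k-submodule with inherited basis: a nonzero bracket of basis vectors
   starting with v_j lies in F v_r with r in mu(j, X, Y), and multilinearity
   extends this to arbitrary arguments.  Minimality then forces every class
   to be all of I. *)

Lemma linear_eq0 (F : fieldType) (V1 V2 : lmodType F) (f : V1 -> V2) :
  (forall (a : F) z z', f (a *: z + z') = a *: f z + f z') -> f 0 = 0.
Proof.
move=> f_lin; apply: (addrI (f 0)).
by have := f_lin 1 0 0; rewrite !scale1r addr0 => f0_eq; rewrite addr0 -f0_eq.
Qed.

Section Span.
Variables (F : fieldType) (V : lmodType F).

Lemma span_subspace (A U : V -> Prop) x :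
  is_subspace U -> (forall y, A y -> U y) -> span A x -> U x.
Proof.
move=> [U0 [UD UZ]] AU; elim=> {x} [| x /AU | x y _ Ux _ Uy | c x _ Ux] //.
- exact: UD.
- exact: UZ.
Qed.

Lemma span_is_subspace (A : V -> Prop) : is_subspace (span A).
Proof.
split; first exact: span_zero.
by split=> [x y|c x]; [exact: span_add | exact: span_scale].
Qed.

Lemma span_monotone (A B : V -> Prop) x :
  (forall y, A y -> B y) -> span A x -> span B x.
Proof. by move=> AB; apply: span_subspace (span_is_subspace B) _ => y /AB/span_in. Qed.

Variables (I : eqType) (v : I -> V).

Definition lincomb (S : I -> Prop) (x : V) : Prop :=
  exists (s : seq I) (c : I -> F), [/\ uniq s, forall j, j \in s -> S j
                                    & x = \sum_(j <- s) c j *: v j].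

Lemma lincomb_add_term (S : I -> Prop) (s : seq I) (c : I -> F) (a : F) j0 :
  uniq s -> (forall j, j \in s -> S j) -> S j0 ->
  lincomb S (\sum_(j <- s) c j *: v j + a *: v j0).
Proof.
move=> s_uniq sS Sj0; have [j0s | j0Ns] := boolP (j0 \in s).
  exists s, (fun j => if j == j0 then c j + a else c j); split=> //.
  rewrite !(perm_big _ (perm_to_rem j0s)) !big_cons eqxx scalerDl addrAC.
  congr (_ + _); apply: eq_big_seq => j.
  by rewrite (mem_rem_uniq _ s_uniq) inE => /andP[/negbTE ->].
exists (j0 :: s), (fun j => if j == j0 then a else c j); split.
- by rewrite /= j0Ns.
- by move=> j; rewrite inE => /orP[/eqP -> | /sS].
rewrite big_cons eqxx addrC; congr (_ + _); apply: eq_big_seq => j js.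
by case: eqP js => [-> | //]; rewrite (negbTE j0Ns).
Qed.

Lemma lincomb_add (S : I -> Prop) (s : seq I) (c : I -> F) x :
  (forall j, j \in s -> S j) -> lincomb S x ->
  lincomb S (x + \sum_(j <- s) c j *: v j).
Proof.
elim: s x => [|j s IHs] x sS Sx; first by rewrite big_nil addr0.
rewrite big_cons addrA; apply: IHs => [i is_s|]; first by apply: sS; rewrite inE is_s orbT.
by case: Sx => s' [c' [s'_uniq s'S ->]]; apply: lincomb_add_term => //; apply: sS; rewrite inE eqxx.
Qed.

Lemma span_lincomb (S : I -> Prop) x :
  span (fun y => exists2 j, S j & y = v j) x -> lincomb S x.
Proof.
elim=> {x} [| x [j Sj ->] | x y _ Sx _ [s [c [_ sS ->]]] | a x _ [s [c [s_uniq sS ->]]]].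
- by exists [::], (fun _ => 0); rewrite big_nil.
- have := @lincomb_add_term S [::] (fun _ => 0) 1 j isT.
  by rewrite big_nil add0r scale1r; apply.
- exact: lincomb_add.
- exists s, (fun j => a * c j); split=> //.
  by rewrite scaler_sumr; apply: eq_bigr => j _; rewrite scalerA.
Qed.

Hypothesis v_basis : is_basis v.

Lemma basis_neq0 i : v i <> 0.
Proof.
move=> vi0; have := v_basis.1 [:: i] (fun _ => 1) isT (fun _ _ => Logic.I).
rewrite big_seq1 vi0 scaler0 => /(_ erefl i); rewrite inE eqxx => /(_ isT) /eqP.
by rewrite oner_eq0.
Qed.

Lemma basis_span_mem (S : I -> Prop) r :
  span (fun y => exists2 j, S j & y = v j) (v r) -> S r.
Proof.
case/span_lincomb => s [c [s_uniq sS vr_def]]; apply: NNPP => NSr.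
have rNs : r \notin s by apply/negP => /sS.
pose c' j := if j == r then -1 else c j.
have sum0 : \sum_(j <- r :: s) c' j *: v j = 0.
  rewrite big_cons /c' eqxx scaleN1r vr_def addrC.
  apply/eqP; rewrite subr_eq0; apply/eqP/eq_big_seq => j js.
  by case: eqP js => [-> | //]; rewrite (negbTE rNs).
have := v_basis.1 (r :: s) c'; rewrite /= rNs s_uniq => /(_ isT (fun _ _ => Logic.I) sum0 r).
by rewrite inE eqxx /c' eqxx => /(_ isT) /eqP; rewrite oppr_eq0 oner_eq0.
Qed.

End Span.

Lemma family_span_ind (F : fieldType) (T : lmodType F) (K : Type) (e : K -> T)
    (m : nat) (G : ('I_m -> T) -> Prop) :
  (forall x, span (fun y => exists2 a, True & y = e a) x) ->
  (forall X l, G (upd X l 0)) ->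
  (forall X l (a : F) z z', G (upd X l z) -> G (upd X l z') -> G (upd X l (a *: z + z'))) ->
  (forall E : 'I_m -> K, G (e \o E)) -> forall X, G X.
Proof.
move=> e_span G0 Glin Ge.
suff G_upto p X : (forall l : 'I_m, (p <= l)%N -> exists a, X l = e a) -> G X.
  by move=> X; apply: (G_upto m) => l; rewrite leqNgt ltn_ord.
elim: p X => [|p IHp] X Xe.
  pose E l := proj1_sig (constructive_indefinite_description _ (Xe l (leq0n _))).
  suff -> : X = e \o E by apply: Ge.
  apply: functional_extensionality => l; rewrite /E /=.
  by case: constructive_indefinite_description.
have [p_lt_m | m_le_p] := ltnP p m; last first.
  by apply: IHp => l p_le_l; have := ltn_ord l; rewrite ltnNge (leq_trans m_le_p p_le_l).
pose l0 := Ordinal p_lt_m.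
have -> : X = upd X l0 (X l0).
  by apply: functional_extensionality => l; rewrite /upd; case: eqP => // ->.
elim: (e_span (X l0)) => [| x [a _ ->] | x y _ Gx _ Gy | c x _ Gx].
- exact: G0.
- apply: IHp => l p_le_l; rewrite /upd; case: eqP => [_|/eqP l_neq]; first by exists a.
  apply: Xe; rewrite ltn_neqAle p_le_l andbT; apply: contra l_neq => /eqP p_eq.
  by apply/eqP/val_inj; rewrite /= p_eq.
- by rewrite -(scale1r x); apply: Glin.
- by rewrite -(addr0 (c *: x)); apply: Glin => //; apply: G0.
Qed.

Section KModuleMinimality.
Variables (F : fieldType) (V W : lmodType F) (n k : nat).
Variable br : 'S_n -> V -> ('I_(k.-1) -> V) -> ('I_(n - k) -> W) -> V.
Variables (I J : eqType) (v : I -> V) (w : J -> W).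

Definition mu_closed (S : I -> Prop) : Prop :=
  forall j X Y r, S j -> mu br v w j X Y r -> S r.

Definition basis_span (S : I -> Prop) : V -> Prop :=
  span (fun y => exists2 j, S j & y = v j).

Lemma conn_path_rcons X Y r p A j :
  conn_path br v w A p j -> mu br v w j X Y r ->
  conn_path br v w A (rcons p (X, Y)) r.
Proof.
elim: p A j => [|XY p IHp] A j //=.
case: p IHp => [|XY' p] IHp /=.
  by move=> Aj muj; split; exists j.
by move=> [nonempty path_j] muj; split=> //; apply: IHp path_j muj.
Qed.

Lemma connected_mu_closed i : mu_closed (connected br v w i).
Proof.
move=> j X Y r [<- | [p path_j]] muj; right.
  by exists [:: (X, Y)]; exists i.
by exists (rcons p (X, Y)); apply: conn_path_rcons path_j muj.
Qed.

Lemma conn_path_closed S p A i' :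
  mu_closed S -> (forall a, A a -> S a) -> conn_path br v w A p i' -> S i'.
Proof.
move=> S_closed; elim: p A => [|XY p IHp] A AS //=.
have phiS r : phi br v w A XY.1 XY.2 r -> S r.
  by case=> j Aj muj; apply: S_closed (AS _ Aj) muj.
by case: p IHp => [|XY' p] IHp; [apply: phiS | case=> _; apply: IHp phiS].
Qed.

Lemma connected_closed S i i' :
  mu_closed S -> S i -> connected br v w i i' -> S i'.
Proof.
move=> S_closed Si [<- // | [p path_i']].
by apply: conn_path_closed S_closed _ path_i' => a ->.
Qed.

Hypotheses (br_ml : multilinear br) (v_basis : is_basis v) (w_basis : is_basis w).

Lemma br0 s X Y : br s 0 X Y = 0.
Proof. by apply: (@linear_eq0 _ _ _ (fun x => br s x X Y)) => a z z'; apply: br_ml.1. Qed.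

Lemma basis_span_inherited S : admits_inherited_basis v (basis_span S).
Proof. by exists S; split=> // s c s_uniq _; apply: v_basis.1. Qed.

Lemma br_basis_span S s j X Y :
  multiplicative br v w -> mu_closed S -> S j -> basis_span S (br s (v j) X Y).
Proof.
move=> br_mult S_closed Sj; case: br_ml => _ [br_linX br_linY].
elim/(family_span_ind (e := v)): X Y => [x|X l Y|X l a z z' UX UX' Y|E].
- by apply: (v_basis.2 x).1.
- by rewrite (linear_eq0 (br_linX s (v j) X Y l)); apply: span_zero.
- by rewrite br_linX; apply: span_add; [apply: span_scale; apply: UX | apply: UX'].
elim/(family_span_ind (e := w)) => [y|Y l|Y l a z z' UY UY'|D].
- by apply: (w_basis.2 y).1.
- by rewrite (linear_eq0 (br_linY s (v j) (v \o E) Y l)); apply: span_zero.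
- by rewrite br_linY; apply: span_add => //; apply: span_scale.
have [r [c br_eq]] := br_mult s j E D.
have [-> | br_neq0] := eqVneq (br s (v j) (v \o E) (w \o D)) 0; first exact: span_zero.
rewrite br_eq; apply: span_scale; apply: span_in; exists r => //.
apply: (S_closed j (fun l => inl (E l)) (fun l => inl (D l))) => //.
by left; exists E, D; do 2!split=> //; exists s; split; [apply/eqP | exists c].
Qed.

Lemma basis_span_k_submodule S :
  multiplicative br v w -> mu_closed S -> k_submodule br (basis_span S).
Proof.
move=> br_mult S_closed; split; first exact: span_is_subspace.
case: br_ml => br_lin _ s u X Y; elim=> {u} [| y [j Sj ->] | x y _ Ux _ Uy | c x _ Ux].
- by rewrite br0; apply: span_zero.
- exact: br_basis_span.
- by rewrite -(scale1r x) br_lin scale1r; apply: span_add.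
- by rewrite -(addr0 (c *: x)) br_lin br0 addr0; apply: span_scale.
Qed.

Lemma inherited_basis_mu_closed U S :
  mu_multiplicative br v w -> k_submodule br U -> is_basis_on S v U -> mu_closed S.
Proof.
move=> br_mu [U_sub U_br] [_ U_span] j X Y r Sj muj.
apply: (basis_span_mem v_basis); apply/U_span.
apply: span_subspace U_sub _ (br_mu _ _ _ _ muj) => _ [s [Xv [Yw ->]]].
by apply/U_br/U_span/span_in; exists j.
Qed.

Lemma inherited_basis_nonempty U S x :
  is_basis_on S v U -> U x -> x <> 0 -> exists i, S i.
Proof.
move=> [_ U_span] Ux x_neq0; apply: NNPP => S_empty; apply: x_neq0.
have zero_sub : is_subspace (fun z : V => z = 0).
  by split=> //; split=> [a b -> ->|c a ->]; rewrite ?addr0 ?scaler0.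
apply: span_subspace zero_sub _ ((U_span x).1 Ux) => z [j Sj _].
by case: S_empty; exists j.
Qed.

End KModuleMinimality.

Theorem mainTheorem9 (F : fieldType) (V W : lmodType F) (n k : nat)
    (hn : (2 <= n)%N) (hk1 : (1 <= k)%N) (hkn : (k <= n)%N)
    (br : 'S_n -> V -> ('I_(k.-1) -> V) -> ('I_(n - k) -> W) -> V)
    (I J : eqType) (v : I -> V) (w : J -> W) :
  multilinear br ->
  is_basis v -> is_basis w ->
  multiplicative br v w ->
  mu_multiplicative br v w ->
  (minimal br v <-> forall i i' : I, connected br v w i i').
Proof.
move=> br_ml v_basis w_basis br_mult br_mu; split.
- move=> V_min i i'; apply: (basis_span_mem v_basis); apply: V_min.
  + exact/basis_span_k_submodule/connected_mu_closed.
  + by exists (v i); [apply: span_in; exists i; first left | apply: basis_neq0].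
  + exact: basis_span_inherited.
- move=> all_connected U U_sub [x Ux x_neq0] [S U_basis] y.
  have S_closed := inherited_basis_mu_closed v_basis br_mu U_sub U_basis.
  have [i0 Si0] := inherited_basis_nonempty U_basis Ux x_neq0.
  apply/(U_basis.2 y)/(span_monotone _ ((v_basis.2 y).1 Logic.I)) => _ [j _ ->].
  by exists j => //; apply: connected_closed S_closed Si0 (all_connected i0 j).
Qed.
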